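(* Let $z$ be an upper bound on the maximum degree of $\Gamma_X$ and $p_0=(8z)^{-2}$. If the bulk error $Z(\eta)\leftarrow\mathcal N(p)$ with $p<p_0$, then the probability that some maximal connected set of marked vertices in the subgraph of $\Gamma_X$ induced on its bulk vertices contains both a vertex of layer $2$ and a vertex of layer $2T$ (i.e. $1-\Pr[\mathsf{CC}_X]$) is at most $$m_x\,\frac{(p/p_0)^{T/2}}{1-\sqrt{p/p_0}}.$$
   Context: $Q=(H^X,H^Z)$ is a CSS code: full-rank $H^X\in\mathbb F_2^{m_x\times n}$, $H^Z\in\mathbb F_2^{m_z\times n}$ with $H^X(H^Z)^T=0$; write $i\sim c$ if qubit $i$ is in the support of check $c$. $Q$ is $\ell$-LDPC (rows of weight $\le\ell$, each qubit in $\le\ell$ checks). A random Pauli error $E$ is local stochastic of rate $p$, $E\leftarrow\mathcal N(p)$, if $\Pr[S\subseteq\mathrm{supp}(E)]\le p^{|S|}$ for every set $S$ of qubits. ATG: fix $T\ge1$; graph with code vertices $q_{i,t}$ ($i\in[n]$, $t\in[2T+1]$), Z-check vertices $z_{c,t}$ ($c\in[m_z]$, $t$ odd), X-check vertices $x_{c,t}$ ($c\in[m_x]$, $t$ even); edges $q_{i,t}q_{i,t+1}$, $q_{i,t}z_{c,t}$ ($t$ odd, $H^Z_{c,i}=1$), $q_{i,t}x_{c,t}$ ($t$ even, $H^X_{c,i}=1$). Boundary $\partial=\{q_{i,1},q_{i,2T+1}\}$, bulk $\mathcal B=$ all other vertices. Decoding setup. A Z-type bulk error is $\eta\in\{0,1\}^{\mathcal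 B}$ with components $P_t\in\{0,1\}^n$ (code vertices of layer $t$, $2\le t\le 2T$) and $B_t$ (check vertices of layer $t$). The meta-check vectors are the indicator vectors $\alpha\in\{0,1\}^{\mathcal B}$ of the sets $\{z_{c,t-1},z_{c,t+1}\}\cup\{q_{i,t}:i\sim c\}$ ($t$ even, $c\in[m_z]$) and $\{x_{c,t-1},x_{c,t+1}\}\cup\{q_{i,t}:i\sim c\}$ ($t$ odd, $3\le t\le 2T-1$, $c\in[m_x]$). The decoder outputs a minimum-Hamming-weight $\beta\in\{0,1\}^{\mathcal B}$ with $\alpha\cdot\beta=\alpha\cdot\eta\pmod 2$ for all meta-check vectors $\alpha$; $R_t,C_t$ denote the components of $\beta$ analogous to $P_t,B_t$. X syndrome adjacency graph $\Gamma_X$: vertex set $\{q_{i,t}: i\in[n], t\text{ odd in }[2T+1]\}\cup\{x_{c,t}:c\in[m_x], t\text{ even in }[2T]\}$; two distinct vertices are adjacent iff both lie in one of the sets $\{x_{c,t-1},x_{c,t+1}\}\cup\{q_{i,t}:i\sim c\}$ (odd $3\le t\le2T-1$), $\{x_{c,2}\}\cup\{q_{i,1}:i\sim c\}$, or $\{x_{c,2T}\}\cup\{q_{i,2T+1}:i\sim c\}$ ($c\in[m_x]$). Its boundary vertices are $q_{i,1},q_{i,2T+1}$; all others are its bulk vertices. Marking of bulk vertices: $q_{i,t}$ is marked iff $(P_t)_i\ne(R_t)_i$; $x_{c,t}$ is marked iff $(B_t)_c\ne(C_t)_c$. $\mathsf{CC}_X$ is the event that no maximal connected set of marked vertices in the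 subgraph of $\Gamma_X$ induced on its bulk vertices contains both a vertex of layer $2$ and a vertex of layer $2T$. *)

From HB Require Import structures.
From mathcomp Require Import all_boot all_order all_algebra.
Set Implicit Arguments. Unset Strict Implicit. Unset Printing Implicit Defensive.
Import Order.TTheory GRing.Theory Num.Theory.

(* "i ~ c" for an X-check c is  HX c i != 0, similarly for Z-checks.   *)

Definition css_code (n mx mz : nat) (HX : 'M['F_2]_(mx, n)) (HZ : 'M['F_2]_(mz, n)) :=
  [/\ \rank HX = mx, \rank HZ = mz & (HX *m HZ^T = 0)%R].

Definition ldpc (l n mx mz : nat) (HX : 'M['F_2]_(mx, n)) (HZ : 'M['F_2]_(mz, n)) :=
  [/\ forall c : 'I_mx, #|[set i : 'I_n | (HX c i != 0)%R]| <= l,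
      forall c : 'I_mz, #|[set i : 'I_n | (HZ c i != 0)%R]| <= l &
      forall i : 'I_n, #|[set c : 'I_mx | (HX c i != 0)%R]| + #|[set c : 'I_mz | (HZ c i != 0)%R]| <= l]%N.

(* Vertices of the ATG.  Layers t are natural numbers 1..2T+1, stored  *)
(* in 'I_(2T+2) (the value 0 is never a valid layer).                  *)
(*   inl (inl (i,t)) = q_{i,t},  inl (inr (c,t)) = z_{c,t},            *)
(*   inr (c,t)       = x_{c,t}.                                        *)
Definition vtx (n mx mz T : nat) : finType :=
  (('I_n * 'I_(T.*2.+2)) + ('I_mz * 'I_(T.*2.+2)) + ('I_mx * 'I_(T.*2.+2)))%type.

Section ATG.
Variables (n mx mz T : nat) (HX : 'M['F_2]_(mx, n)) (HZ : 'M['F_2]_(mz, n)).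
Local Notation V := (vtx n mx mz T).

Definition layer (v : V) : nat :=
  match v with inl (inl (_, t)) => t | inl (inr (_, t)) => t | inr (_, t) => t end.

Definition is_q (i : 'I_n) (t : nat) (v : V) : bool :=
  match v with inl (inl (i', t')) => (i' == i) && (t' == t :> nat) | _ => false end.
Definition is_z (c : 'I_mz) (t : nat) (v : V) : bool :=
  match v with inl (inr (c', t')) => (c' == c) && (t' == t :> nat) | _ => false end.
Definition is_x (c : 'I_mx) (t : nat) (v : V) : bool :=
  match v with inr (c', t') => (c' == c) && (t' == t :> nat) | _ => false end.

Definition atg_vertex (v : V) : bool :=
  match v with
  | inl (inl (_, t)) => 1 <= t
  | inl (inr (_, t)) => odd t
  | inr (_, t) => (0 < t) && ~~ odd t
  end%N.

Definition atg_bulk (v : V) : bool :=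
  atg_vertex v && ~~ [exists i : 'I_n, is_q i 1 v || is_q i T.*2.+1 v].

Definition Bulk : finType := {v : V | atg_bulk v}.

Definition valB (e : {ffun Bulk -> bool}) (v : V) : bool :=
  if insub v is Some b then e b else false.

Definition metaZ (c : 'I_mz) (t : nat) (v : V) : bool :=
  [|| is_z c t.-1 v, is_z c t.+1 v | [exists i : 'I_n, (HZ c i != 0)%R && is_q i t v]].
Definition metaX (c : 'I_mx) (t : nat) (v : V) : bool :=
  [|| is_x c t.-1 v, is_x c t.+1 v | [exists i : 'I_n, (HX c i != 0)%R && is_q i t v]].

Definition dotB (alpha : pred V) (e : {ffun Bulk -> bool}) : bool :=
  odd #|[set b : Bulk | alpha (val b) && e b]|.

Definition same_meta_syndrome (eta beta : {ffun Bulk -> bool}) : bool :=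
  [forall c : 'I_mz, forall t : 'I_(T.*2.+2),
     ((2 <= t <= T.*2) && ~~ odd t)%N ==> (dotB (metaZ c t) beta == dotB (metaZ c t) eta)]
  && [forall c : 'I_mx, forall t : 'I_(T.*2.+2),
     ((3 <= t <= T.*2 - 1) && odd t)%N ==> (dotB (metaX c t) beta == dotB (metaX c t) eta)].

Definition weightB (e : {ffun Bulk -> bool}) : nat := #|[set b | e b]|.

Definition min_weight_decoder (dec : {ffun Bulk -> bool} -> {ffun Bulk -> bool}) : Prop :=
  forall eta, same_meta_syndrome eta (dec eta) /\
    forall beta, same_meta_syndrome eta beta -> (weightB (dec eta) <= weightB beta)%N.

Definition gx_vertex (v : V) : bool :=
  match v with
  | inl (inl (_, t)) => odd t
  | inl (inr _) => false
  | inr (_, t) => (0 < t) && ~~ odd t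
  end.

Definition gx_set (c : 'I_mx) (t : nat) (v : V) : bool :=
  [|| ((3 <= t <= T.*2 - 1) && odd t)%N &&
        [|| is_x c t.-1 v, is_x c t.+1 v | [exists i : 'I_n, (HX c i != 0)%R && is_q i t v]],
      (t == 1)%N &&
        (is_x c 2 v || [exists i : 'I_n, (HX c i != 0)%R && is_q i 1 v]) |
      (t == T.*2.+1)%N &&
        (is_x c T.*2 v || [exists i : 'I_n, (HX c i != 0)%R && is_q i T.*2.+1 v])].

Definition gx_adj (u v : V) : bool :=
  [&& u != v, gx_vertex u, gx_vertex v &
      [exists c : 'I_mx, exists t : 'I_(T.*2.+2), gx_set c t u && gx_set c t v]].

Definition gx_bulk (v : V) : bool :=
  gx_vertex v && ~~ [exists i : 'I_n, is_q i 1 v || is_q i T.*2.+1 v].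

Definition marked (eta beta : {ffun Bulk -> bool}) (v : V) : bool :=
  gx_bulk v && (valB eta v != valB beta v).

Definition marked_rel (eta beta : {ffun Bulk -> bool}) : rel V :=
  fun u v => [&& gx_adj u v, marked eta beta u & marked eta beta v].

Definition not_CC_X (eta beta : {ffun Bulk -> bool}) : bool :=
  [exists u : V, exists v : V,
     [&& marked eta beta u, marked eta beta v, layer u == 2, layer v == T.*2
       & connect (marked_rel eta beta) u v]].

End ATG.

Definition is_distr (R : numDomainType) (Om : finType) (mu : {ffun Om -> R}) : Prop :=
  ((forall w, 0 <= mu w) /\ \sum_w mu w = 1)%R.

Definition prob (R : numDomainType) (Om : finType) (mu : {ffun Om -> R}) (E : pred Om) : R :=
  (\sum_(w | E w) mu w)%R.

Definition local_stochastic (R : numDomainType) (B : finType)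
    (mu : {ffun {ffun B -> bool} -> R}) (p : R) : Prop :=
  forall S : {set B}, (prob mu (fun e => S \subset [set b | e b]) <= p ^+ #|S|)%R.

From HB Require Import structures.
From mathcomp Require Import all_boot all_order all_algebra zify ring lra.
Set Implicit Arguments. Unset Strict Implicit. Unset Printing Implicit Defensive.
Import Order.TTheory GRing.Theory Num.Theory.

(* If CC_X fails, the marked component C of Gamma_X through some x_{c,2}
   reaches layer 2T, so |C| >= T.  Flipping the decoder output on C keeps its
   meta-syndrome (a Z meta-check misses C, an X meta-check meets C in all or
   none of its marked vertices), so by minimality the error eta covers at least
   half of C, an event of probability at most 2^|C| p^(|C|/2) = (2 sqrt p)^|C|.
   Writing 2 sqrt p = r / (4z) with r = sqrt (p/p0), it remains to sum
   (4z)^-|C| over the connected sets C containing a fixed vertex: peeling off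
   that vertex and recursing on the components of the rest bounds this sum by
   (2z)^-1 in any graph of maximum degree z. *)

Section NonnegSums.
Local Open Scope ring_scope.
Variables (R : numDomainType) (I : finType).

Lemma ler_sum_sub (P Q : pred I) (G : I -> R) :
  (forall i, P i -> Q i) -> (forall i, Q i -> 0 <= G i) ->
  \sum_(i | P i) G i <= \sum_(i | Q i) G i.
Proof.
move=> PQ G0; rewrite [X in X <= _]big_mkcond [X in _ <= X]big_mkcond /=.
apply: ler_sum => i _; case: (boolP (P i)) => Pi; first by rewrite PQ.
by case: (boolP (Q i)) => Qi //; exact: G0.
Qed.

Lemma ler_sum_orb (P Q : pred I) (G : I -> R) : (forall i, 0 <= G i) ->
  \sum_(i | P i || Q i) G i <= \sum_(i | P i) G i + \sum_(i | Q i) G i.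
Proof.
move=> G0; rewrite (big_mkcond (fun i => _ || _)) (big_mkcond P) (big_mkcond Q) -big_split /=.
apply: ler_sum => i _; case: (P i); case: (Q i) => /=; rewrite ?addr0 ?add0r //.
by rewrite lerDl.
Qed.

End NonnegSums.

Lemma bernoulli_upper (R : realDomainType) (y : R) m :
  (0 <= y -> (1 + y) ^+ m * (1 - m%:R * y) <= 1)%R.
Proof.
move=> y0; elim: m => [|m IH]; first by rewrite expr0 mul0r subr0 mulr1.
apply: le_trans IH.
have X0 : (0 <= (1 + y) ^+ m)%R by apply: exprn_ge0; rewrite addr_ge0.
have h : (0 <= (m%:R + 1) * y ^+ 2)%R by apply: mulr_ge0; [apply: addr_ge0 | exact: exprn_ge0].
have -> : ((1 + y) ^+ m.+1 * (1 - m.+1%:R * y) = (1 + y) ^+ m * ((1 + y) * (1 - m.+1%:R * y)))%R.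
  by rewrite exprS; ring.
by rewrite ler_wpM2l // -natr1; nra.
Qed.

Section Probability.
Local Open Scope ring_scope.
Variables (R : numDomainType) (Om : finType) (mu : {ffun Om -> R}).
Hypothesis mu_ge0 : forall w, 0 <= mu w.

Lemma prob_mono (A B : pred Om) : (forall w, A w -> B w) -> prob mu A <= prob mu B.
Proof. by move=> AB; apply: ler_sum_sub. Qed.

Lemma prob_union_le (I : finType) (A : pred Om) (P : pred I) (E : I -> pred Om) :
  (forall w, A w -> exists2 i, P i & E i w) ->
  prob mu A <= \sum_(i | P i) prob mu (E i).
Proof.
move=> HA; rewrite /prob.
apply: le_trans (_ : \sum_(w | A w) \sum_(i | P i && E i w) mu w <= _).
  apply: ler_sum => w Aw; have [i Pi Ei] := HA w Aw.
  rewrite (bigD1 i) /=; last by rewrite Pi Ei.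
  by rewrite lerDl; apply: sumr_ge0 => ? _.
apply: le_trans (_ : \sum_w \sum_(i | P i && E i w) mu w <= _).
  by apply: ler_sum_sub => // w _; exact: sumr_ge0.
under eq_bigr do rewrite big_mkcondr.
by rewrite exchange_big /=; apply: ler_sum => i _; rewrite [X in _ <= X]big_mkcond.
Qed.

End Probability.

Section ConnectedSets.
Variables (V : finType) (e : rel V).
Hypothesis e_sym : symmetric e.

Definition restrict (K : {set V}) : rel V := fun a b => [&& a \in K, b \in K & e a b].
Definition component (D : {set V}) (u : V) : {set V} := [set w | connect (restrict D) u w].
Definition conn_set (F C : {set V}) (v : V) : bool :=
  [&& v \in C, [disjoint C & F] & [forall w in C, connect (restrict C) v w]].

Lemma restrict_sym K : symmetric (restrict K).
Proof. by move=> a b; rewrite /restrict e_sym; case: (a \in K); case: (b \in K). Qed.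

Lemma connect_restrict_mem (D : {set V}) a b :
  connect (restrict D) a b -> a = b \/ (a \in D /\ b \in D).
Proof.
move/connectP=> [[|c p] /=]; first by move=> _ ->; left.
move=> /andP[/and3P[aD cD _] Hp] ->; right; split => //.
by elim: p c cD Hp => //= d p IH c _ /andP[/and3P[_ dD _]]; exact: IH.
Qed.

Lemma component_sub (D : {set V}) u : u \in D -> component D u \subset D.
Proof.
by move=> uD; apply/subsetP => w; rewrite inE => /connect_restrict_mem [<-|[]].
Qed.

Lemma component_trans (D : {set V}) a b w :
  w \in component D a -> w \in component D b -> b \in component D a.
Proof.
rewrite !inE => aw bw; apply: connect_trans aw _.
by rewrite (sym_connect_sym (@restrict_sym D)).
Qed.

Lemma path_component (D : {set V}) u a p :
  connect (restrict D) u a -> path (restrict D) a p -> path (restrict (component D u)) a p.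
Proof.
elim: p a => //= b p IH a ua /andP[Hab Hp].
move: (Hab) => /and3P[_ _ eab].
have ub : connect (restrict D) u b by apply: connect_trans ua (connect1 Hab).
by rewrite (IH b ub Hp) andbT /restrict !inE ua ub eab.
Qed.

Lemma conn_set_component (D F : {set V}) u :
  u \in D -> [disjoint D & F] -> conn_set F (component D u) u.
Proof.
move=> uD dDF; apply/and3P; split; first by rewrite inE connect0.
  exact: disjointWl (component_sub uD) dDF.
apply/forall_inP => w; rewrite inE => /connectP [p Hp ->].
by apply/connectP; exists p => //; apply: path_component.
Qed.

(* Removing v from a connected set C splits C :\ v into components, each
   containing a neighbour of v outside F.  Tagging every component with its
   neighbour of least rank, [pieces C u] is the component tagged by u (empty
   if u tags none); C is recovered as v |: \bigcup_u pieces C u. *)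
Section Pieces.
Variables (F : {set V}) (v : V).

Definition out_nbrs : {set V} := [set u | e v u && (u \notin v |: F)].

Definition tags (C : {set V}) (u : V) : bool :=
  [&& u \in out_nbrs, u \in C &
      [forall w in out_nbrs, (w \in component (C :\ v) u) ==> (enum_rank u <= enum_rank w)%N]].

Definition pieces (C : {set V}) : {ffun V -> {set V}} :=
  [ffun u => if tags C u then component (C :\ v) u else set0].

Definition piece_choices (u : V) : {set {set V}} :=
  if u \in out_nbrs then [set s | (s == set0) || conn_set (v |: F) s u] else [set set0].

Variable C : {set V}.
Hypothesis C_conn : conn_set F C v.

Lemma tags_mem u : tags C u -> u \in C :\ v.
Proof. by case/and3P => /[!inE] /andP[_] /norP[uv _] uC _; rewrite uv uC. Qed.

Lemma pieces_choice u : pieces C u \in piece_choices u.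
Proof.
rewrite /pieces ffunE /piece_choices; case: ifP => Hr; last first.
  by case: ifP => _; rewrite !inE eqxx.
have uN : u \in out_nbrs by case/and3P: Hr.
rewrite uN inE; apply/orP; right; apply: conn_set_component; first exact: tags_mem.
case/and3P: C_conn => _ dCF _.
rewrite disjoint_subset; apply/subsetP => x; rewrite !inE => /andP[xv xC].
by rewrite negb_or xv (disjointFr dCF xC).
Qed.

Lemma pieces_sub u : pieces C u \subset C :\ v.
Proof.
rewrite /pieces ffunE; case: ifP => Hr; last exact: sub0set.
exact/component_sub/tags_mem.
Qed.

Lemma pieces_disjoint w u1 u2 : w \in pieces C u1 -> w \in pieces C u2 -> u1 = u2.
Proof.
rewrite /pieces !ffunE.
case H1: (tags C u1); last by rewrite inE.
case H2: (tags C u2); last by move=> _; rewrite inE.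
move=> w1 w2.
case/and3P: H1 => u1N _ /forall_inP /(_ _ (proj1 (andP H2))) /implyP.
move=> /(_ (component_trans w1 w2)) r12.
case/and3P: H2 => u2N _ /forall_inP /(_ _ u1N) /implyP /(_ (component_trans w2 w1)) r21.
by apply: enum_rank_inj; apply: val_inj; apply/eqP; rewrite eqn_leq r12 r21.
Qed.

Lemma path_avoid_center a p w : a \in C -> path (restrict C) a p -> w = last a p -> w != v ->
  (exists2 u, (u \in C :\ v) && e v u & connect (restrict (C :\ v)) u w)
  \/ (a != v /\ connect (restrict (C :\ v)) a w).
Proof.
elim: p a => /= [|b p IH] a aC; first by move=> _ -> av; right.
move=> /andP[/and3P[_ bC eab] Hp] wl wv.
case: (IH b bC Hp wl wv) => [|[bv cbw]]; first by left.
case: (eqVneq a v) => [av|av].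
  by left; exists b => //; rewrite !inE bv bC -av eab.
right; split => //; apply: connect_trans cbw; apply: connect1.
by rewrite /restrict !inE av bv aC bC eab.
Qed.

Lemma pieces_cover w : w \in C :\ v -> exists u, w \in pieces C u.
Proof.
rewrite !inE => /andP[wv wC].
case/and3P: C_conn => vC dCF /forall_inP /(_ w wC) /connectP [p Hp wl].
case: (path_avoid_center vC Hp wl wv) => [[u0 /andP[u0Cv evu0] cu0w]|[]]; last by rewrite eqxx.
have u0N : u0 \in out_nbrs.
  by move: u0Cv; rewrite !inE => /andP[u0v u0C]; rewrite evu0 (negbTE u0v) (disjointFr dCF u0C).
pose P u := (u \in out_nbrs) && (w \in component (C :\ v) u).
have Pu0 : P u0 by rewrite /P u0N inE.
case: (arg_minnP (fun u => enum_rank u : nat) Pu0) => u /andP[uN wu] umin.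
exists u; rewrite /pieces ffunE.
suff -> : tags C u by [].
apply/and3P; split => //.
  by move: wu; rewrite inE => /connect_restrict_mem [->|[/setD1P[_ ->] //]].
apply/forall_inP => x xN; apply/implyP => ux.
apply: umin; rewrite /P xN /= inE; move: ux wu; rewrite !inE => ux wu.
by apply: connect_trans _ wu; rewrite (sym_connect_sym (@restrict_sym _)).
Qed.

Lemma card_pieces : (1 + \sum_u #|pieces C u| <= #|C|)%N.
Proof.
case/and3P: C_conn => vC _ _.
rewrite (cardsD1 v C) vC leq_add2l.
have cardE (A : {set V}) : #|A| = (\sum_w (w \in A : nat))%N.
  by rewrite -sum1_card big_mkcond /=; apply: eq_bigr => w _; case: (w \in A).
rewrite (eq_bigr (fun u => \sum_w (w \in pieces C u : nat))%N); last by move=> u _; exact: cardE.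
rewrite exchange_big cardE /=; apply: leq_sum => w _.
case: (boolP (w \in C :\ v)) => wC.
  have [u wu] := pieces_cover wC.
  rewrite (bigD1 u) //= wu big1 // => u' u'u.
  by case: (boolP (w \in pieces C u')) => // wu'; move: u'u; rewrite (pieces_disjoint wu' wu) eqxx.
rewrite big1 // => u _; case: (boolP (w \in pieces C u)) => // wu.
by move: wC; rewrite (subsetP (pieces_sub u) _ wu).
Qed.

Lemma pieces_recover : C = v |: \bigcup_u pieces C u.
Proof.
case/and3P: C_conn => vC _ _.
apply/setP => w; rewrite !inE; case: (eqVneq w v) => [->|wv] //=.
apply/idP/bigcupP.
  move=> wC; have wCv : w \in C :\ v by rewrite !inE wv wC.
  by have [u wu] := pieces_cover wCv; exists u.
by case=> u _ /(subsetP (pieces_sub u)); rewrite !inE => /andP[].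
Qed.

End Pieces.

Section ConnSetsBound.
Local Open Scope ring_scope.
Variables (R : numDomainType) (a : R).
Hypotheses (a_ge0 : 0 <= a) (a_le1 : a <= 1).

Lemma sum_conn_sets_le_prod (F : {set V}) v :
  \sum_(C | conn_set F C v) a ^+ #|C|
    <= a * \prod_u \sum_(s in piece_choices F v u) a ^+ #|s|.
Proof.
pose G (f : {ffun V -> {set V}}) := a * \prod_u a ^+ #|f u|.
have G_ge0 f : 0 <= G f by rewrite mulr_ge0 // prodr_ge0 // => u _; exact: exprn_ge0.
apply: le_trans (_ : \sum_(C | conn_set F C v) G (pieces F v C) <= _).
  apply: ler_sum => C HC; rewrite /G prodrXr -exprS.
  by apply: ler_wiXn2l => //; rewrite -add1n; exact: card_pieces.
have -> : \sum_(C | conn_set F C v) G (pieces F v C) =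
          \sum_(f in pieces F v @: [set C | conn_set F C v]) G f.
  rewrite big_imset /=; first by apply: eq_bigl => C; rewrite inE.
  move=> C1 C2; rewrite !inE => H1 H2 eq12.
  by rewrite (pieces_recover H1) (pieces_recover H2) eq12.
apply: le_trans (_ : \sum_(f in family (fun u s => s \in piece_choices F v u)) G f <= _).
  apply: ler_sum_sub => [f|f _ //].
  by case/imsetP => C; rewrite inE => HC ->; apply/familyP => u; exact: pieces_choice.
rewrite -mulr_sumr.
by rewrite -(bigA_distr_big_dep (fun u s => s \in piece_choices F v u)
                                 (fun u (s : {set V}) => a ^+ #|s|)).
Qed.

Variables (y : R) (z : nat).
Hypotheses (y_ge0 : 0 <= y) (a_y : a * (1 + y) ^+ z <= y)
  (deg_le : forall v, (#|[set w | e v w]| <= z)%N).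

Lemma sum_conn_sets_step (F : {set V}) v :
  (forall u, u \in out_nbrs F v -> \sum_(C | conn_set (v |: F) C u) a ^+ #|C| <= y) ->
  \sum_(C | conn_set F C v) a ^+ #|C| <= y.
Proof.
move=> IH; apply: le_trans (sum_conn_sets_le_prod F v) _; apply: le_trans a_y.
apply: ler_wpM2l => //.
apply: le_trans (_ : \prod_u (if u \in out_nbrs F v then 1 + y else 1) <= _).
  apply: ler_prod => u _; apply/andP; split.
    by apply: sumr_ge0 => s _; exact: exprn_ge0.
  rewrite /piece_choices; case: ifP => uN; last by rewrite big_set1 cards0 expr0.
  apply: le_trans (_ : \sum_(s | (s == set0) || conn_set (v |: F) s u) a ^+ #|s| <= _).
    by apply: ler_sum_sub => [s|s _]; [rewrite inE | exact: exprn_ge0].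
  apply: le_trans (ler_sum_orb _ _ _) _ => [s|]; first exact: exprn_ge0.
  by rewrite big_pred1_eq cards0 expr0 lerD2l; exact: IH.
rewrite -big_mkcond prodr_const /=.
apply: ler_weXn2l; first by rewrite lerDl.
apply: leq_trans (deg_le v); apply: subset_leq_card; apply/subsetP => u.
by rewrite !inE => /andP[].
Qed.

Lemma sum_conn_sets_le (F : {set V}) v : v \notin F -> \sum_(C | conn_set F C v) a ^+ #|C| <= y.
Proof.
move: {2}#|~: F| (leqnn #|~: F|) => m; elim: m F v => [|m IH] F v Fm vF.
  by move: Fm; rewrite leqn0 cards_eq0 => /eqP/setP/(_ v); rewrite !inE vF.
apply: sum_conn_sets_step => u; rewrite inE => /andP[_ uF]; apply: IH uF.
have -> : ~: (v |: F) = (~: F) :\ v by apply/setP => x; rewrite !inE negb_or.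
by move: Fm; rewrite (cardsD1 v (~: F)) inE vF.
Qed.

End ConnSetsBound.

Section DegreeBound.
Local Open Scope ring_scope.
Variables (R : realFieldType) (z : nat).
Hypotheses (z_gt0 : (0 < z)%N) (deg_le : forall v, (#|[set w | e v w]| <= z)%N).

Lemma sum_conn_sets_inv_le v :
  \sum_(C | conn_set set0 C v) (4 * z%:R)^-1 ^+ #|C| <= (2 * z%:R : R)^-1.
Proof.
have z1 : 1 <= z%:R :> R by rewrite ler1n.
have a_y : (4 * z%:R)^-1 * (1 + (2 * z%:R)^-1) ^+ z <= (2 * z%:R : R)^-1.
  have y0 : 0 <= (2 * z%:R : R)^-1 by rewrite invr_ge0; lra.
  have := bernoulli_upper z y0.
  have -> : 1 - z%:R * (2 * z%:R)^-1 = 2^-1 :> R by field; rewrite gt_eqF //; lra.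
  have -> : (2 * z%:R)^-1 = (4 * z%:R)^-1 * 2 :> R by field; rewrite gt_eqF //; lra.
  move=> le2; rewrite ler_wpM2l ?invr_ge0 //; lra.
apply: (sum_conn_sets_le _ _ _ a_y deg_le); rewrite ?inE //.
- by rewrite invr_ge0; lra.
- by rewrite invf_le1; lra.
- by rewrite invr_ge0; lra.
Qed.

Lemma sum_large_conn_sets_le (s : R) (m : nat) v : 0 <= s -> 8 * z%:R * s <= 1 ->
  \sum_(C | conn_set set0 C v && (m <= #|C|)%N)
     \sum_(S : {set V} | (S \subset C) && (#|C| <= 2 * #|S|)%N) (s ^+ 2) ^+ #|S|
  <= (8 * z%:R * s) ^+ m / (2 * z%:R).
Proof.
move=> s0 r1; set r := 8 * z%:R * s; pose a : R := (4 * z%:R)^-1.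
have z1 : 1 <= z%:R :> R by rewrite ler1n.
have r0 : 0 <= r by rewrite /r; nra.
have a0 : 0 <= a by rewrite invr_ge0; lra.
have two_s : 2 * s = r * a by rewrite /r /a; field; rewrite gt_eqF //; lra.
apply: le_trans (_ : \sum_(C | conn_set set0 C v && (m <= #|C|)%N) r ^+ m * a ^+ #|C| <= _).
  apply: ler_sum => C /andP[_ mC].
  apply: le_trans (_ : \sum_(S : {set V} | (S \subset C) && (#|C| <= 2 * #|S|)%N) s ^+ #|C| <= _).
    apply: ler_sum => S /andP[_ CS]; rewrite -exprM.
    by apply: ler_wiXn2l => //; rewrite /r in r1; nra.
  apply: le_trans (_ : \sum_(S in powerset C) s ^+ #|C| <= _).
    apply: ler_sum_sub => [S /andP[SC _]|S _]; [by rewrite powersetE | exact: exprn_ge0].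
  rewrite sumr_const card_powerset -mulr_natl natrX -exprMn two_s exprMn.
  by rewrite ler_wpM2r ?exprn_ge0 //; apply: ler_wiXn2l.
rewrite -mulr_sumr ler_wpM2l ?exprn_ge0 //.
apply: le_trans (sum_conn_sets_inv_le v).
by apply: ler_sum_sub => [C /andP[]//|C _]; exact: exprn_ge0.
Qed.

End DegreeBound.
End ConnectedSets.

Section CardParity.
Variables (B : finType) (A x y : pred B).

Lemma card_set_sum (P : pred B) : #|[set b | P b]| = \sum_b (P b : nat).
Proof. by rewrite -sum1_card big_mkcond /=; apply: eq_bigr => b _; rewrite inE; case: (P b). Qed.

Lemma card_setI_xorb :
  #|[set b | A b && (x b (+) y b)]| + 2 * #|[set b | [&& A b, x b & y b]]| =
  #|[set b | A b && x b]| + #|[set b | A b && y b]|.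
Proof.
rewrite !card_set_sum big_distrr -!big_split /=; apply: eq_bigr => b _.
by case: (A b); case: (x b); case: (y b).
Qed.

Lemma card_xorb :
  #|[set b | x b (+) y b]| + 2 * #|[set b | x b && y b]| = #|[set b | x b]| + #|[set b | y b]|.
Proof.
rewrite !card_set_sum big_distrr -!big_split /=; apply: eq_bigr => b _.
by case: (x b); case: (y b).
Qed.

Lemma odd_card_xorb :
  odd #|[set b | A b && (x b (+) y b)]| =
  odd #|[set b | A b && x b]| (+) odd #|[set b | A b && y b]|.
Proof. by rewrite -oddD -card_setI_xorb oddD mul2n odd_double addbF. Qed.

Lemma card_setI_split : #|[set b | A b && x b]| + #|[set b | A b && ~~ x b]| = #|[set b | A b]|.
Proof.
rewrite !card_set_sum -big_split /=; apply: eq_bigr => b _.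
by case: (A b); case: (x b).
Qed.

End CardParity.

Section ATGFacts.
Variables (n mx mz T : nat) (HX : 'M['F_2]_(mx, n)) (HZ : 'M['F_2]_(mz, n)).
Local Notation V := (vtx n mx mz T).
Local Notation BB := (Bulk n mx mz T).

Lemma valB_val (e : {ffun BB -> bool}) (b : BB) : valB e (val b) = e b.
Proof. by rewrite /valB valK. Qed.

Lemma gx_bulk_atg_bulk (w : V) : gx_bulk w -> atg_bulk w.
Proof.
rewrite /gx_bulk /atg_bulk => /andP[H1 ->]; rewrite andbT.
by case: w H1 => [[[i t]|[c t]]|[c t]] //=; case: (nat_of_ord t).
Qed.

Lemma gx_bulk_val (w : V) : gx_bulk w -> exists b : BB, val b = w.
Proof. by move/gx_bulk_atg_bulk => H; exists (Sub w H). Qed.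

Lemma gx_adj_sym : symmetric (gx_adj HX : rel V).
Proof.
move=> a b; rewrite /gx_adj eq_sym.
have -> : [exists c, exists t : 'I_(T.*2.+2), gx_set HX c t a && gx_set HX c t b] =
          [exists c, exists t : 'I_(T.*2.+2), gx_set HX c t b && gx_set HX c t a].
  by apply: eq_existsb => c; apply: eq_existsb => t; rewrite andbC.
by case: (gx_vertex a); case: (gx_vertex b); rewrite ?andbF.
Qed.

Lemma layer_is_x c k (w : V) : is_x c k w -> layer w = k.
Proof. by case: w => [[[i t]|[c' t]]|[c' t]] //= /andP[_ /eqP]. Qed.

Lemma layer_is_q i k (w : V) : is_q i k w -> layer w = k.
Proof. by case: w => [[[i' t]|[c' t]]|[c' t]] //= /andP[_ /eqP]. Qed.

Lemma gx_set_layer c t (w : V) : gx_set HX c t w -> (t.-1 <= layer w <= t.+1)%N.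
Proof.
rewrite /gx_set => /or3P[/andP[_ /or3P[/layer_is_x->|/layer_is_x->|
                                       /existsP[i /andP[_ /layer_is_q->]]]]
                  |/andP[/eqP-> /orP[/layer_is_x->|/existsP[i /andP[_ /layer_is_q->]]]]
                  |/andP[/eqP-> /orP[/layer_is_x->|/existsP[i /andP[_ /layer_is_q->]]]]] //=; lia.
Qed.

Lemma gx_adj_layer (a b : V) : gx_adj HX a b -> (layer b <= layer a + 2)%N.
Proof.
case/and4P => _ _ _ /existsP[c /existsP[t /andP[/gx_set_layer Ha /gx_set_layer Hb]]].
by move: Ha Hb => /andP[h1 h2] /andP[h3 h4]; lia.
Qed.

Definition x_layer2 (c : 'I_mx) : V := inr (c, inord 2).

Lemma gx_layer2 (u : V) : gx_vertex u -> layer u = 2%N -> exists c : 'I_mx, u = x_layer2 c.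
Proof.
case: u => [[[i t]|[c t]]|[c t]] //=; first by move=> ot lt; rewrite lt in ot.
move=> _ lt; exists c; congr (inr (c, _)); apply: val_inj => /=.
by rewrite inordK // -lt ltn_ord.
Qed.

Definition gx_bulk_adj : rel V := fun a b => [&& gx_adj HX a b, gx_bulk a & gx_bulk b].

Lemma gx_bulk_adj_sym : symmetric gx_bulk_adj.
Proof.
move=> u v; rewrite /gx_bulk_adj gx_adj_sym.
by case: (gx_bulk u); case: (gx_bulk v); rewrite ?andbF.
Qed.

Lemma gx_bulk_adj_deg (z : nat) :
  (forall v : V, gx_vertex v -> (#|[set w | gx_adj HX v w]| <= z)%N) ->
  forall v : V, (#|[set w | gx_bulk_adj v w]| <= z)%N.
Proof.
move=> Hz v; case: (boolP (gx_bulk v)) => gv.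
  apply: leq_trans (Hz _ (proj1 (andP gv))); apply: subset_leq_card.
  by apply/subsetP => w; rewrite !inE => /andP[].
suff -> : [set w | gx_bulk_adj v w] = set0 by rewrite cards0.
by apply/setP => w; rewrite !inE /gx_bulk_adj (negbTE gv) andbF.
Qed.

(* Z meta-checks live on even layers, where Gamma_X has no code vertices. *)
Lemma metaZ_not_gx c (t : nat) (w : V) : ~~ odd t -> metaZ HZ c t w -> ~~ gx_vertex w.
Proof.
move=> ot; case: w => [[[i' t']|[c' t']]|[c' t']] //=; rewrite /metaZ /=.
  by move=> /existsP[i /andP[_ /andP[_ /eqP ->]]].
by move=> /existsP[i]; rewrite andbF.
Qed.

Lemma metaX_gx c (t : 'I_(T.*2.+2)) (w : V) : ((3 <= t <= T.*2 - 1) && odd t)%N ->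
  metaX HX c t w -> gx_bulk w && gx_set HX c t w.
Proof.
move=> ct Hm; have -> : gx_set HX c t w by rewrite /gx_set ct; move: Hm; rewrite /metaX => ->.
rewrite andbT; move: ct Hm => /andP[/andP[t3 t2] ot].
case: w => [[[i' t']|[c' t']]|[c' t']] //=; rewrite /metaX /=.
- move=> /existsP[i /and3P[_ _ /eqP tt]]; rewrite /gx_bulk /= tt ot /=.
  by apply/negP => /existsP[j /orP[] /andP[_ /eqP h]]; lia.
- by move=> /existsP[i]; rewrite andbF.
- have Hf : [exists i : 'I_n, (HX c i != 0%R) && false] = false.
    by apply: negbTE; apply/existsP => -[i]; rewrite andbF.
  rewrite Hf orbF => H; rewrite /gx_bulk /=.
  have -> : [exists i : 'I_n, false || false] = false by apply: negbTE; apply/existsP => -[].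
  rewrite andbT; case/orP: H => /andP[_ /eqP ->]; last by rewrite /= ot.
  by case: (nat_of_ord t) t3 ot => [|[|tt]] //= _; rewrite negbK.
Qed.

End ATGFacts.

Arguments x_layer2 {n mx mz T}.

Section MarkedComponent.
Variables (n mx mz T : nat) (HX : 'M['F_2]_(mx, n)) (HZ : 'M['F_2]_(mz, n)).
Local Notation V := (vtx n mx mz T).
Local Notation BB := (Bulk n mx mz T).
Variables (eta beta : {ffun BB -> bool}) (u : V).
Hypothesis u_marked : marked eta beta u.
Local Notation mrel := (marked_rel HX eta beta).

Definition marked_comp : {set V} := [set w | connect mrel u w].

Lemma connect_marked w : connect mrel u w -> marked eta beta w.
Proof.
move=> /connectP[p Hp ->]; elim: p u u_marked Hp => //= b p IH a _.
by case/andP=> /and3P[_ _ mb]; exact: IH.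
Qed.

Lemma connect_marked_bulk w : connect mrel u w -> gx_bulk w.
Proof. by case/connect_marked/andP. Qed.

Lemma conn_set_marked_comp : conn_set (gx_bulk_adj HX) set0 marked_comp u.
Proof.
apply/and3P; split; first by rewrite inE connect0.
  by rewrite disjoint_subset; apply/subsetP => x; rewrite !inE.
apply/forall_inP => w; rewrite inE => /connectP[p Hp ->].
apply/connectP; exists p => //.
have : connect mrel u u by [].
elim: p {-2}u Hp => //= b p IH a /andP[Hab Hp] ua.
have ub : connect mrel u b by apply: connect_trans ua (connect1 Hab).
move: (Hab) => /and3P[adj _ _].
rewrite IH // andbT /restrict /gx_bulk_adj !inE ua ub adj /=.
by rewrite !(connect_marked_bulk ua) ?(connect_marked_bulk ub).
Qed.

Lemma marked_path_crosses j a p : connect mrel u a -> path mrel a p ->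
  (layer a <= j.*2.+1)%N -> (j.*2 <= layer (last a p))%N ->
  exists2 w, w \in marked_comp & (j.*2 <= layer w <= j.*2.+1)%N.
Proof.
elim: p a => /= [|b p IH] a ua; first by move=> _ h1 h2; exists a; rewrite ?inE ?h1 ?h2.
move=> /andP[Hab Hp] h1 h2.
case: (leqP j.*2 (layer a)) => h; first by exists a; rewrite ?inE ?h ?h1.
apply: IH (connect_trans ua (connect1 Hab)) Hp _ h2.
by move: Hab => /and3P[/gx_adj_layer hl _ _]; lia.
Qed.

(* Edges of Gamma_X climb at most two layers, so a marked path from layer 2
   to layer 2T meets each of the T layer pairs {2j, 2j+1}. *)
Lemma marked_comp_large v : v \in marked_comp -> layer u = 2%N -> layer v = T.*2 ->
  (T <= #|marked_comp|)%N.
Proof.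
move=> vC Lu Lv.
pose pair_of (w : V) : 'I_T.+1 := inord (layer w)./2.
have sub : [set~ ord0] \subset pair_of @: marked_comp.
  apply/subsetP => j; rewrite !inE -val_eqE /= -lt0n => j0.
  move: vC; rewrite inE => /connectP[p Hp Hv].
  have jT : (j <= T)%N by rewrite -ltnS ltn_ord.
  have [w wC /andP[h1 h2]] := @marked_path_crosses j u p (connect0 _ _) Hp
     ltac:(rewrite Lu; lia) ltac:(rewrite -Hv Lv; lia).
  apply/imsetP; exists w => //; apply: val_inj; rewrite /= inordK; last lia.
  have [->|->] : layer w = j.*2 \/ layer w = j.*2.+1 by lia.
    by rewrite doubleK.
  by rewrite /= uphalf_double.
move: (subset_leq_card sub); rewrite cardsC1 card_ord => /leq_trans; apply.
exact: leq_imset_card.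
Qed.

Definition flip_comp : {ffun BB -> bool} := [ffun b : BB => beta b (+) (val b \in marked_comp)].

Lemma dotB_flip_comp (alpha : pred V) :
  dotB alpha flip_comp =
  dotB alpha beta (+) odd #|[set b : BB | alpha (val b) && (val b \in marked_comp)]|.
Proof.
rewrite /dotB -(odd_card_xorb (fun b : BB => alpha (val b)) beta (fun b => val b \in marked_comp)).
suff -> : [set b : BB | alpha (val b) && flip_comp b] =
          [set b | alpha (val b) && (beta b (+) (val b \in marked_comp))] by [].
by apply/setP => b; rewrite !inE /flip_comp ffunE !inE.
Qed.

Lemma metaZ_marked_comp c (t : nat) : ~~ odd t ->
  [set b : BB | metaZ HZ c t (val b) && (val b \in marked_comp)] = set0.
Proof.
move=> ot; apply/setP => b; rewrite in_set in_set0; apply/negP => /andP[hm hC].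
by move: (metaZ_not_gx ot hm); rewrite inE in hC; case/andP: (connect_marked_bulk hC) => ->.
Qed.

(* The Gamma_X vertices of one X meta-check form a clique, so the marked
   component contains either none or all of its marked vertices. *)
Lemma metaX_marked_comp c (t : 'I_(T.*2.+2)) : ((3 <= t <= T.*2 - 1) && odd t)%N ->
  [set b : BB | metaX HX c t (val b) && (val b \in marked_comp)] = set0 \/
  [set b : BB | metaX HX c t (val b) && (val b \in marked_comp)] =
  [set b : BB | metaX HX c t (val b) && (eta b (+) beta b)].
Proof.
move=> ct; case: (set_0Vmem [set b : BB | metaX HX c t (val b) && (val b \in marked_comp)]).
  by left.
case=> b0; rewrite !inE => /andP[hm0 hC0].
right; apply/setP => b; rewrite !inE; apply/andP/andP => [][hm hb]; split => //.
  move: (connect_marked hb); rewrite /marked !valB_val => /andP[_].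
  by case: (eta b); case: (beta b).
have mb : marked eta beta (val b).
  rewrite /marked !valB_val (proj1 (andP (metaX_gx ct hm))) /=.
  by move: hb; case: (eta b); case: (beta b).
case: (eqVneq (val b0) (val b)) => [<-|neq] //.
have adj : gx_adj HX (val b0) (val b).
  rewrite /gx_adj neq.
  case/andP: (metaX_gx ct hm0) => /andP[-> _] s0; case/andP: (metaX_gx ct hm) => /andP[-> _] sb /=.
  by apply/existsP; exists c; apply/existsP; exists t; rewrite s0 sb.
have mb0 := connect_marked hC0; apply: connect_trans hC0 (connect1 _).
by rewrite /marked_rel adj mb mb0.
Qed.

Hypothesis beta_syndrome : same_meta_syndrome HX HZ eta beta.

Lemma same_meta_syndrome_flip_comp : same_meta_syndrome HX HZ eta flip_comp.
Proof.
case/andP: beta_syndrome => /forallP synZ /forallP synX; apply/andP; split.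
  apply/forallP => c; apply/forallP => t; apply/implyP => ct.
  move/forallP/(_ t)/implyP/(_ ct): (synZ c).
  by rewrite dotB_flip_comp metaZ_marked_comp ?cards0 ?addbF //; case/andP: ct.
apply/forallP => c; apply/forallP => t; apply/implyP => ct.
move/forallP/(_ t)/implyP/(_ ct)/eqP: (synX c) => eq_syn.
rewrite dotB_flip_comp; case: (metaX_marked_comp c ct) => ->; first by rewrite cards0 addbF eq_syn.
rewrite (odd_card_xorb (fun b : BB => metaX HX c t (val b))).
by move: eq_syn; rewrite /dotB => ->; case: (odd _).
Qed.

Hypothesis beta_min :
  forall beta', same_meta_syndrome HX HZ eta beta' -> (weightB beta <= weightB beta')%N.

Lemma marked_comp_half : (#|marked_comp| <= 2 * #|marked_comp :&: [set w | valB eta w]|)%N.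
Proof.
have := beta_min same_meta_syndrome_flip_comp; rewrite /weightB.
pose Cb (b : BB) := val b \in marked_comp.
have -> : [set b | flip_comp b] = [set b | beta b (+) Cb b].
  by apply/setP => b; rewrite !inE /flip_comp ffunE.
move: (card_xorb beta Cb) (card_setI_split Cb beta) => xor_eq split_eq.
have eta_eq : [set b | Cb b && ~~ beta b] = [set b | Cb b && eta b].
  apply/setP => b; rewrite !inE /Cb; case: (boolP (val b \in marked_comp)) => //= hb.
  move: hb; rewrite inE => /connect_marked; rewrite /marked !valB_val => /andP[_].
  by case: (eta b); case: (beta b).
have beta_eq : [set b | beta b && Cb b] = [set b | Cb b && beta b].
  by apply/setP => b; rewrite !inE andbC.
rewrite eta_eq in split_eq; rewrite beta_eq in xor_eq.
have comp_le : (#|marked_comp| <= #|[set b | Cb b]|)%N.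
  have sub : marked_comp \subset val @: [set b | Cb b].
    apply/subsetP => w hw; move: (hw); rewrite inE => /connect_marked_bulk /gx_bulk_val [b hb].
    by apply/imsetP; exists b; rewrite // inE /Cb hb.
  exact: leq_trans (subset_leq_card sub) (leq_imset_card _ _).
have eta_le : (#|[set b | Cb b && eta b]| <= #|marked_comp :&: [set w | valB eta w]|)%N.
  rewrite -(card_imset _ val_inj); apply: subset_leq_card; apply/subsetP => w.
  case/imsetP => b; rewrite inE => /andP[hb he] ->.
  by rewrite in_setI; apply/andP; split; [exact: hb | rewrite inE valB_val].
by lia.
Qed.

End MarkedComponent.

Local Open Scope ring_scope.

Lemma prob_valB_cover_le (R : numDomainType) (n mx mz T : nat)
    (mu : {ffun {ffun Bulk n mx mz T -> bool} -> R}) (p : R) (S : {set vtx n mx mz T}) :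
  (forall w, 0 <= mu w) -> local_stochastic mu p -> S \subset [set w | gx_bulk w] ->
  prob mu (fun eta => S \subset [set w | valB eta w]) <= p ^+ #|S|.
Proof.
move=> mu0 Hls /subsetP SB; pose S' := [set b : Bulk n mx mz T | val b \in S].
have SE : val @: S' = S.
  apply/setP => w; apply/imsetP/idP => [[b] | wS]; first by rewrite inE => ? ->.
  have : gx_bulk w by move: (SB w wS); rewrite inE.
  by case/gx_bulk_val => b bw; exists b; rewrite // inE bw.
rewrite -SE (card_imset _ val_inj); apply: le_trans _ (Hls S').
apply: (prob_mono mu0) => eta /subsetP HS; apply/subsetP => b bS.
by move: (HS (val b) (imset_f _ bS)); rewrite !inE valB_val.
Qed.

Section Witness.
Variables (n mx mz T : nat) (HX : 'M['F_2]_(mx, n)) (HZ : 'M['F_2]_(mz, n)).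
Local Notation V := (vtx n mx mz T).
Local Notation BB := (Bulk n mx mz T).

Definition witness (c : 'I_mx) (C S : {set V}) : bool :=
  [&& conn_set (gx_bulk_adj HX) set0 C (x_layer2 c), (T <= #|C|)%N,
      C \subset [set w | gx_bulk w], S \subset C & (#|C| <= 2 * #|S|)%N].

Lemma not_CC_X_witness (dec : {ffun BB -> bool} -> {ffun BB -> bool}) eta :
  min_weight_decoder HX HZ dec -> not_CC_X HX eta (dec eta) ->
  exists2 i : 'I_mx * ({set V} * {set V}),
    witness i.1 i.2.1 i.2.2 & i.2.2 \subset [set w | valB eta w].
Proof.
move=> Hdec /existsP[u /existsP[v /and5P[mu mv /eqP lu /eqP lv uv]]].
have [dec_syn dec_min] := Hdec eta.
have [c uE] := gx_layer2 (proj1 (andP (proj1 (andP mu)))) lu.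
set C := marked_comp HX eta (dec eta) u.
exists (c, (C, C :&: [set w | valB eta w])); last exact: subsetIr.
apply/and5P; split => /=.
- by rewrite -uE; exact: conn_set_marked_comp.
- by apply: (marked_comp_large (HX := HX) mu (v := v)) lu lv; rewrite inE.
- by apply/subsetP => w; rewrite !inE; exact: (connect_marked_bulk (HX := HX) mu).
- exact: subsetIl.
- exact: (marked_comp_half mu dec_syn dec_min).
Qed.

Lemma sum_witness_le (R : realFieldType) (z : nat) (c : 'I_mx) (s : R) :
  (0 < z)%N -> (forall v : V, gx_vertex v -> (#|[set w | gx_adj HX v w]| <= z)%N) ->
  0 <= s -> 8 * z%:R * s <= 1 ->
  \sum_(j : {set V} * {set V} | witness c j.1 j.2) (s ^+ 2) ^+ #|j.2|
    <= (8 * z%:R * s) ^+ T / (2 * z%:R).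
Proof.
move=> z_gt0 Hz s0 r1.
apply: le_trans _ (sum_large_conn_sets_le (gx_bulk_adj_sym HX) z_gt0 (gx_bulk_adj_deg Hz)
                                          T (x_layer2 c) s0 r1).
have -> : \sum_(j : {set V} * {set V} | witness c j.1 j.2) (s ^+ 2) ^+ #|j.2| =
          \sum_(C : {set V}) \sum_(S | witness c C S) (s ^+ 2) ^+ #|S|.
  by rewrite pair_big_dep /=; apply: eq_big => [[C S]|[C S] _].
rewrite [X in _ <= X]big_mkcond /=; apply: ler_sum => C _.
case: ifP => CP; last first.
  rewrite big_pred0 // => S; apply/negbTE; apply: contraFN CP.
  by case/and5P => -> -> _ _ _.
by apply: ler_sum_sub => [S /and5P[_ _ _ -> ->] //|S _]; rewrite exprn_ge0 ?sqr_ge0.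
Qed.

Lemma prob_not_CC_X_le (R : realFieldType) (z : nat)
    (dec : {ffun BB -> bool} -> {ffun BB -> bool}) (mu : {ffun {ffun BB -> bool} -> R}) (s : R) :
  (0 < z)%N -> (forall v : V, gx_vertex v -> (#|[set w | gx_adj HX v w]| <= z)%N) ->
  min_weight_decoder HX HZ dec -> (forall w, 0 <= mu w) -> local_stochastic mu (s ^+ 2) ->
  0 <= s -> 8 * z%:R * s <= 1 ->
  prob mu (fun eta => not_CC_X HX eta (dec eta)) <= mx%:R * ((8 * z%:R * s) ^+ T / (2 * z%:R)).
Proof.
move=> z_gt0 Hz Hdec mu0 Hls s0 r1.
pose W (i : 'I_mx * ({set V} * {set V})) := witness i.1 i.2.1 i.2.2.
apply: le_trans (prob_union_le mu0 (P := W)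
  (E := fun i eta => i.2.2 \subset [set w | valB eta w]) (fun eta => not_CC_X_witness Hdec)) _.
apply: le_trans (_ : \sum_(i | W i) (s ^+ 2) ^+ #|i.2.2| <= _).
  apply: ler_sum => -[c [C S]] /and5P[_ _ CB SC _].
  exact: prob_valB_cover_le mu0 Hls (subset_trans SC CB).
have -> : \sum_(i | W i) (s ^+ 2) ^+ #|i.2.2| =
          \sum_(c < mx) \sum_(j : {set V} * {set V} | witness c j.1 j.2) (s ^+ 2) ^+ #|j.2|.
  by rewrite pair_big_dep; apply: eq_big => [[c j]|[c j] _].
apply: le_trans (ler_sum _ (fun c _ => sum_witness_le c z_gt0 Hz s0 r1)) _.
by rewrite sumr_const card_ord -[_ *+ mx]mulr_natl.
Qed.

End Witness.

Lemma sqrt_div_invsqr (R : rcfType) (p K : R) :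
  0 <= p -> 0 <= K -> Num.sqrt (p / (K ^+ 2)^-1) = K * Num.sqrt p.
Proof. by move=> p0 K0; rewrite invrK sqrtrM // sqrtr_sqr ger0_norm // mulrC. Qed.

Theorem lemma5p2 (R : rcfType) (n mx mz T l : nat)
    (HX : 'M['F_2]_(mx, n)) (HZ : 'M['F_2]_(mz, n))
    (Hcss : css_code HX HZ) (Hldpc : ldpc l HX HZ) (HT : (1 <= T)%N)
    (z : nat)
    (Hz : forall v : vtx n mx mz T, gx_vertex v ->
            (#|[set w | gx_adj HX v w]| <= z)%N)
    (dec : {ffun Bulk n mx mz T -> bool} -> {ffun Bulk n mx mz T -> bool})
    (Hdec : min_weight_decoder HX HZ dec)
    (mu : {ffun {ffun Bulk n mx mz T -> bool} -> R}) (p : R)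
    (Hmu : is_distr mu) (Hp0 : 0 <= p) (Hls : local_stochastic mu p) :
  let p0 : R := ((8 * z)%:R ^+ 2)^-1 in
  p < p0 ->
  prob mu (fun eta => not_CC_X HX eta (dec eta))
    <= mx%:R * (Num.sqrt (p / p0)) ^+ T / (1 - Num.sqrt (p / p0)).
Proof.
move=> p0 p_lt; have mu0 : forall w, 0 <= mu w by case: Hmu.
have z_gt0 : (0 < z)%N.
  rewrite lt0n; apply/eqP => z0; move: p_lt; rewrite /p0 z0 muln0 expr0n invr0.
  by move/(le_lt_trans Hp0); rewrite ltxx.
have p0_gt0 : 0 < p0 by rewrite invr_gt0 exprn_gt0 // ltr0n muln_gt0.
have r_lt1 : Num.sqrt (p / p0) < 1 by rewrite -sqrtr1 ltr_sqrt // ltr_pdivrMr // mul1r.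
have r_ge0 := sqrtr_ge0 (p / p0).
rewrite [Num.sqrt _]sqrt_div_invsqr ?ler0n // natrM in r_lt1 r_ge0 *.
rewrite -(sqr_sqrtr Hp0) in Hls.
apply: le_trans (prob_not_CC_X_le z_gt0 Hz Hdec mu0 Hls (sqrtr_ge0 p) (ltW r_lt1)) _.
rewrite -[X in _ <= X]mulrA ler_wpM2l // ler_wpM2l ?exprn_ge0 //.
have z_ge1 : 1 <= z%:R :> R by rewrite ler1n.
apply: (@le_trans _ _ 1); first by rewrite invf_le1; lra.
by rewrite invf_ge1; lra.
Qed.
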